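(* Let $A$ be a dg algebra over a commutative ring $k$ and $x,x'$ Maurer–Cartan elements of $A$. Then $x$ and $x'$ are homotopy gauge equivalent if and only if they are $K_2$-homotopic.
   Context: A Maurer–Cartan element is $x\in A^1$ with $dx+x^2=0$. For such $x$, $A^{[x]}$ is the right dg $A$-module with underlying graded module $A$ and differential $a\mapsto da+xa$; $x,x'$ are homotopy gauge equivalent if $A^{[x]}$ and $A^{[x']}$ are homotopy equivalent right dg $A$-modules, i.e. there are closed degree-0 module maps in both directions whose composites are cohomologous to the identities in the dg Hom complexes. Let $I$ be the singular simplicial set of $[0,1]$. Let $K_2\subset I$ be the simplicial subset generated by the two affine singular 2-simplices $\Delta^2\to[0,1]$ sending the vertices $(x_0,x_1,x_2)$ to $(0,1,0)$ and to $(1,0,1)$ respectively; it has two nondegenerate simplices in each of dimensions 0, 1, 2. $K_2^*$ is its normalized cochain algebra with values in $k$ with the Alexander–Whitney product, and $ev_0,ev_1:K_2^*\to k$ are restriction to the 0-simplices $0$ and $1$. $x,x'$ are $K_2$-homotopic if there is a Maurer–Cartan element $X\in A\otimes K_2^*$ with $(\mathrm{id}_A\otimes ev_0)(X)=x$ and $(\mathrm{id}_A\otimes ev_1)(X)=x'$. *)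

From HB Require Import structures.
From mathcomp Require Import all_boot all_order all_algebra.
Set Implicit Arguments. Unset Strict Implicit. Unset Printing Implicit Defensive.
Import Order.TTheory GRing.Theory Num.Theory.
Local Open Scope ring_scope.

Record dga (k : comPzRingType) (A : algType k) := DGA {
  hom : int -> A -> Prop;
  dd : A -> A;
  hom0 : forall n, hom n 0;
  homD : forall n a b, hom n a -> hom n b -> hom n (a + b);
  homZ : forall n (c : k) a, hom n a -> hom n (c *: a);
  homM : forall m n a b, hom m a -> hom n b -> hom (m + n) (a * b);
  hom1 : hom 0 1;
  (* A is the direct sum of the A^n *)
  hom_span : forall a : A, exists s : seq (int * A),
      [/\ uniq (unzip1 s), (forall p, p \in s -> hom p.1 p.2)
        & a = \sum_(p <- s) p.2];
  hom_indep : forall s : seq (int * A), uniq (unzip1 s) ->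
      (forall p, p \in s -> hom p.1 p.2) -> \sum_(p <- s) p.2 = 0 ->
      forall p, p \in s -> p.2 = 0;
  ddD : forall a b, dd (a + b) = dd a + dd b;
  ddZ : forall (c : k) a, dd (c *: a) = c *: dd a;
  dd_hom : forall n a, hom n a -> hom (n + 1) (dd a);
  ddM : forall m a b, hom m a ->
      dd (a * b) = dd a * b + (-1) ^+ (absz m) * (a * dd b);
  dd_dd : forall a, dd (dd a) = 0
}.

Section Defs.
Variables (k : comPzRingType) (A : algType k) (D : dga A).

Definition MC (x : A) : Prop := hom D 1 x /\ dd D x + x * x = 0.

(* The differential of the right dg A-module A^[x]: a |-> da + xa. *)
Definition dtw (x : A) (a : A) : A := dd D a + x * a.

(* Degree-n elements of the dg Hom complex Hom_A(A^[x], A^[x']) of right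
   dg A-modules: graded k-linear maps of degree n (the underlying graded
   module of A^[x] is A) that are right A-linear. *)
Definition hom_map (n : int) (f : A -> A) : Prop :=
  [/\ forall a b, f (a + b) = f a + f b,
      forall (c : k) a, f (c *: a) = c *: f a,
      forall a b, f (a * b) = f a * b
    & forall m a, hom D m a -> hom D (m + n) (f a)].

Definition Dhom (x x' : A) (n : int) (f : A -> A) : A -> A :=
  fun a => dtw x' (f a) - (-1) ^+ (absz n) * f (dtw x a).

Definition closed_map (x x' : A) (n : int) (f : A -> A) : Prop :=
  forall a, Dhom x x' n f a = 0.

Definition cohomologous (x x' : A) (f g : A -> A) : Prop :=
  exists h : A -> A, hom_map (-1) h /\
    forall a, f a - g a = Dhom x x' (-1) h a.

(* x, x' homotopy gauge equivalent: A^[x], A^[x'] homotopy equivalent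
   right dg A-modules. *)
Definition homotopy_gauge_equiv (x x' : A) : Prop :=
  exists f g : A -> A,
    [/\ hom_map 0 f /\ closed_map x x' 0 f,
        hom_map 0 g /\ closed_map x' x 0 g,
        cohomologous x x (fun a => g (f a)) id
      & cohomologous x' x' (fun a => f (g a)) id].

(* Every simplex of K_2 is affine with vertices in {0,1} (faces and    *)
(* degeneracies of affine simplices are affine), hence is determined   *)
(* by its vertex sequence, encoded as a [seq bool] (false = 0,         *)
(* true = 1).  The n-simplices of K_2 are exactly the degeneracies of  *)
(* 0, 1, (0,1), (1,0), (0,1,0), (1,0,1), i.e. the vertex sequences of  *)
(* length n+1 with at most two alternations.  Faces delete a vertex,   *)
(* degenerate simplices have two equal consecutive vertices, the       *)
(* Alexander--Whitney front/back faces are take/drop.                  *)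
End Defs.

Fixpoint alternations (s : seq bool) : nat :=
  match s with
  | a :: ((b :: _) as t) => (a != b) + alternations t
  | _ => 0
  end.

Definition K2simplex (s : seq bool) : bool :=
  (0 < size s)%N && (alternations s <= 2)%N.

Definition degenerate (s : seq bool) : bool :=
  has (fun p : bool * bool => p.1 == p.2) (zip s (behead s)).

Definition K2nondeg (s : seq bool) : bool := K2simplex s && ~~ degenerate s.

Definition face (i : nat) (s : seq bool) : seq bool := take i s ++ drop i.+1 s.

Section Tensor.
Variables (k : comPzRingType) (A : algType k) (D : dga A).

(* Since the normalized cochains N^i(K_2; k) are free of finite rank on
   the nondegenerate i-simplices, an element of degree n of A (x) K_2^*
   is the same as a normalized A-valued cochain X: X(s) = 0 for s not a
   nondegenerate simplex of K_2, and X(s) in A^(n-i) for s a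
   nondegenerate i-simplex (sum of a (x) s^* over nondegenerate s). *)
Definition TKelem (n : int) (X : seq bool -> A) : Prop :=
  forall s, (K2nondeg s -> hom D (n - ((size s)%:Z - 1)) (X s)) /\
            (~~ K2nondeg s -> X s = 0).

(* Differential of A (x) K_2^* on a degree-n element:
   d(a (x) phi) = da (x) phi + (-1)^|a| a (x) delta phi, with
   (delta phi)(tau) = sum_l (-1)^l phi(d_l tau). *)
Definition dT (n : int) (X : seq bool -> A) (s : seq bool) : A :=
  dd D (X s) + (-1) ^+ (absz (n - ((size s)%:Z - 2))%R) *
    \sum_(l < size s) (-1) ^+ l * X (face l s).

(* Product of X with Y (Y of degree q):
   (a (x) phi)(b (x) psi) = (-1)^(|phi||b|) ab (x) (phi u psi),
   (phi u psi)(sigma) = phi(front_i sigma) psi(back_j sigma) (Alexander--Whitney). *)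
Definition mulT (q : int) (X Y : seq bool -> A) (s : seq bool) : A :=
  \sum_(i < size s)
    (-1) ^+ (i * absz (q - ((size s)%:Z - 1 - i%:Z))%R) *
      (X (take i.+1 s) * Y (drop i s)).

Definition MC_T (X : seq bool -> A) : Prop :=
  TKelem 1 X /\ forall s, K2nondeg s -> dT 1 X s + mulT 1 X X s = 0.

(* (id (x) ev_0)(X) = X(vertex 0), (id (x) ev_1)(X) = X(vertex 1). *)
Definition K2_homotopic (x x' : A) : Prop :=
  exists X : seq bool -> A,
    [/\ MC_T X, X [:: false] = x & X [:: true] = x'].

End Tensor.

(* Right A-linear maps A^[x] -> A^[y] of degree n are left multiplications by
   elements u of A^n, and the differential of the Hom complex sends such a map
   to left multiplication by du + yu - (-1)^n ux.  So a homotopy equivalence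
   between A^[x] and A^[x'] amounts to w, v in A^0 and t, t' in A^-1 with
   dw + x'w = wx, dv + xv = vx', vw - 1 = dt + xt + tx, wv - 1 = dt' + x't' + t'x'.
   The Maurer-Cartan equation of X in A (x) K_2^* splits over the six
   nondegenerate simplices of K_2: at a vertex it is the Maurer-Cartan equation
   of X(a); at an edge ab it says that 1 + X(ab) is closed as a map
   A^[X(b)] -> A^[X(a)]; at a triangle aba it says that -X(aba) is a homotopy
   from (1 + X(ab))(1 + X(ba)) to the identity of A^[X(a)].  Hence the two
   kinds of data correspond via w = 1 + X(10), v = 1 + X(01), t = -X(010),
   t' = -X(101). *)

From Pilot Require Import Defs.
From HB Require Import structures.
From mathcomp Require Import all_boot all_order all_algebra.
Set Implicit Arguments. Unset Strict Implicit. Unset Printing Implicit Defensive.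
Import GRing.Theory.
Local Open Scope ring_scope.

Lemma K2nondeg_ind (P : seq bool -> Prop) :
  P [:: false] -> P [:: true] -> P [:: false; true] -> P [:: true; false] ->
  P [:: false; true; false] -> P [:: true; false; true] ->
  forall s, K2nondeg s -> P s.
Proof.
move=> ? ? ? ? ? ? [|[] [|[] [|[] [|[] s]]]] //.
all: by rewrite /K2nondeg /K2simplex /degenerate /= ?andbF.
Qed.

Section GaugeData.
Variables (k : comPzRingType) (A : algType k) (D : dga A).

Lemma dd0 : dd D 0 = 0.
Proof. by apply: (@addrI _ (dd D 0)); rewrite -ddD !addr0. Qed.

Lemma ddN (a : A) : dd D (- a) = - dd D a.
Proof. by apply/eqP; rewrite -addr_eq0 -ddD addNr dd0. Qed.

Lemma dd1 : dd D 1 = 0.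
Proof.
have := ddM 1 (hom1 D); rewrite !mulr1 expr0 !mul1r => dd1D.
by apply: (@addrI _ (dd D 1)); rewrite addr0 -dd1D.
Qed.

Lemma homN n (a : A) : Defs.hom D n a -> Defs.hom D n (- a).
Proof. by rewrite -scaleN1r; apply: homZ. Qed.

Definition Dmul (x y : A) (n : int) (u : A) : A :=
  dd D u + y * u - (-1) ^+ absz n * (u * x).

Lemma Dhom_mull x y n u a :
  Defs.hom D n u -> Dhom D x y n (fun b => u * b) a = Dmul x y n u * a.
Proof.
move=> hu; rewrite /Dhom /dtw /Dmul (ddM _ hu) !mulrDr !mulrDl mulNr !mulrA.
by rewrite opprD addrA [_ + y * u * a]addrAC addrK.
Qed.

Lemma Dhom_eq x y n (f g : A -> A) : f =1 g -> Dhom D x y n f =1 Dhom D x y n g.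
Proof. by move=> fg a; rewrite /Dhom !fg. Qed.

Lemma hom_map_mull n u : Defs.hom D n u -> hom_map D n (fun a => u * a).
Proof.
move=> hu; split=> [a b|c a|a b|m a ha]; first exact: mulrDr.
- by rewrite scalerAr.
- by rewrite mulrA.
- by rewrite addrC; apply: homM.
Qed.

Lemma hom_mapE n f : hom_map D n f -> f =1 (fun a => f 1 * a).
Proof. by case=> _ _ fM _ a; rewrite -fM mul1r. Qed.

Lemma hom_map1 n f : hom_map D n f -> Defs.hom D n (f 1).
Proof. by case=> _ _ _ fhom; rewrite -[n]add0r; apply: fhom (hom1 D). Qed.

Definition closed_mul (x y u : A) : Prop := Defs.hom D 0 u /\ Dmul x y 0 u = 0.

Definition homotopic_id (x u t : A) : Prop :=
  Defs.hom D (-1) t /\ u - 1 = Dmul x x (-1) t.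

Definition gauge_data (x x' w v t t' : A) : Prop :=
  [/\ closed_mul x x' w, closed_mul x' x v,
       homotopic_id x (v * w) t & homotopic_id x' (w * v) t'].

Lemma closed_mapP x y n f u :
  Defs.hom D n u -> f =1 (fun a => u * a) ->
  closed_map D x y n f <-> Dmul x y n u = 0.
Proof.
move=> hu fu; split=> [fclosed | Du a].
- by have := fclosed 1; rewrite (Dhom_eq _ _ _ fu) Dhom_mull // mulr1.
- by rewrite (Dhom_eq _ _ _ fu) Dhom_mull // Du mul0r.
Qed.

Lemma cohomologous_idP x f u :
  f =1 (fun a => u * a) ->
  cohomologous D x x f id <-> exists t, homotopic_id x u t.
Proof.
move=> fu; split=> [[h [hh he]] | [t [ht te]]].
- exists (h 1); split; first exact: hom_map1 hh.
  by have := he 1; rewrite fu (Dhom_eq _ _ _ (hom_mapE hh)) Dhom_mull ?mulr1 //; apply: hom_map1 hh.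
- exists (fun a => t * a); split; first exact: hom_map_mull.
  by move=> a; rewrite Dhom_mull // -te fu mulrBl mul1r.
Qed.

Lemma homotopy_gauge_equivP x x' :
  homotopy_gauge_equiv D x x' <-> exists w v t t', gauge_data x x' w v t t'.
Proof.
split=> [[f [g [[fh fc] [gh gc] gf fg]]] | [w [v [t [t' [[hw Dw] [hv Dv] gf fg]]]]]].
- have fE := hom_mapE fh; have gE := hom_mapE gh.
  have gfE : (fun a => g (f a)) =1 (fun a => g 1 * f 1 * a).
    by move=> a; rewrite fE gE mulrA.
  have fgE : (fun a => f (g a)) =1 (fun a => f 1 * g 1 * a).
    by move=> a; rewrite fE gE mulrA.
  have [t ht] := (cohomologous_idP _ gfE).1 gf.
  have [t' ht'] := (cohomologous_idP _ fgE).1 fg.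
  exists (f 1), (g 1), t, t'; split=> //.
  + by split; [exact: hom_map1 fh | apply/(closed_mapP _ _ (hom_map1 fh) fE)].
  + by split; [exact: hom_map1 gh | apply/(closed_mapP _ _ (hom_map1 gh) gE)].
- exists (fun a => w * a), (fun a => v * a); split.
  + by split; [exact: hom_map_mull | apply/(closed_mapP _ _ hw)].
  + by split; [exact: hom_map_mull | apply/(closed_mapP _ _ hv)].
  + by apply/(@cohomologous_idP _ _ (v * w)); [move=> a; rewrite mulrA | exists t].
  + by apply/(@cohomologous_idP _ _ (w * v)); [move=> a; rewrite mulrA | exists t'].
Qed.

Lemma dT_mulT_vertex X a :
  X [::] = 0 ->
  dT D 1 X [:: a] + mulT 1 X X [:: a] = dd D (X [:: a]) + X [:: a] * X [:: a].
Proof.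
move=> Xnil; rewrite /dT /mulT /face /= !big_ord_recr !big_ord0 /= Xnil.
by rewrite !(expr0, mulr0, add0r, mul1r, addr0).
Qed.

Lemma dT_mulT_edge X a b :
  dT D 1 X [:: a; b] + mulT 1 X X [:: a; b] =
  Dmul (X [:: b]) (X [:: a]) 0 (1 + X [:: a; b]).
Proof.
rewrite /dT /mulT /face /Dmul /= !big_ord_recr !big_ord0 /= !add0r.
rewrite expr0 expr1 !mul1r !mulN1r ddD dd1 add0r mulrDr mulrDl mulr1 mul1r.
by rewrite opprB opprD !addrA (addrAC _ (- X [:: b])).
Qed.

Lemma dT_mulT_loop X a b :
  X [:: a; a] = 0 ->
  dT D 1 X [:: a; b; a] + mulT 1 X X [:: a; b; a] =
  (1 + X [:: a; b]) * (1 + X [:: b; a]) - 1 -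
    Dmul (X [:: a]) (X [:: a]) (-1) (- X [:: a; b; a]).
Proof.
move=> Xaa; rewrite /dT /mulT /face /Dmul /= !big_ord_recr !big_ord0 /= Xaa.
rewrite subnn !(mul0n, muln0, muln1, addn0, expr0, mul1r, mulr0, add0r, addr0).
rewrite expr1 sqrrN expr1n mul1r mulN1r ddN mulrN mulNr !opprK -!opprD opprK.
rewrite mulrDr !mulrDl !mul1r mulr1 -[1 + _ + _]addrA [1 + _]addrC addrK.
by rewrite [LHS](AC ((1*2)*3) ((3*(2*5))*(1*4*6))).
Qed.

Definition K2_cochain (x x' u01 u10 e010 e101 : A) (s : seq bool) : A :=
  match s with
  | [:: false] => x | [:: true] => x'
  | [:: false; true] => u01 | [:: true; false] => u10
  | [:: false; true; false] => e010 | [:: true; false; true] => e101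
  | _ => 0
  end.

Lemma K2_homotopic_gauge_data x x' :
  K2_homotopic D x x' -> exists w v t t', gauge_data x x' w v t t'.
Proof.
case=> X [[TK mcX] X0 X1].
have X00 : X [:: false; false] = 0 by apply: (TK _).2.
have X11 : X [:: true; true] = 0 by apply: (TK _).2.
have h01 : Defs.hom D 0 (X [:: false; true]).
  by move: ((TK [:: false; true]).1 isT).
have h10 : Defs.hom D 0 (X [:: true; false]).
  by move: ((TK [:: true; false]).1 isT).
have h010 : Defs.hom D (-1) (X [:: false; true; false]).
  by move: ((TK [:: false; true; false]).1 isT).
have h101 : Defs.hom D (-1) (X [:: true; false; true]).
  by move: ((TK [:: true; false; true]).1 isT).
exists (1 + X [:: true; false]), (1 + X [:: false; true]),
  (- X [:: false; true; false]), (- X [:: true; false; true]).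
split; (split; [by apply: homD (hom1 D) _ || apply: homN |]).
- by rewrite -X0 -X1 -dT_mulT_edge mcX.
- by rewrite -X0 -X1 -dT_mulT_edge mcX.
- by apply/eqP; rewrite -subr_eq0 -X0 -dT_mulT_loop // mcX.
- by apply/eqP; rewrite -subr_eq0 -X1 -dT_mulT_loop // mcX.
Qed.

Lemma gauge_data_K2_homotopic x x' w v t t' :
  MC D x -> MC D x' -> gauge_data x x' w v t t' -> K2_homotopic D x x'.
Proof.
move=> [hx mcx] [hx' mcx'] [[hw Dw] [hv Dv] [ht te] [ht' te']].
exists (K2_cochain x x' (v - 1) (w - 1) (- t) (- t')); split=> //; split.
- move=> s; split=> [|/negbTE]; last by case: s => [|[] [|[] [|[] [|[] s]]]].
  move: s; apply: K2nondeg_ind => //=.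
  + exact: homD hv (homN (hom1 D)).
  + exact: homD hw (homN (hom1 D)).
  + exact: homN.
  + exact: homN.
- apply: K2nondeg_ind; rewrite ?dT_mulT_vertex ?dT_mulT_edge ?dT_mulT_loop //=.
  all: by rewrite ?opprK ![1 + (_ - 1)]addrC ?subrK ?te ?te' ?subrr.
Qed.

End GaugeData.

Theorem lemma5p5 (k : comPzRingType) (A : algType k) (D : dga A) (x x' : A) :
  MC D x -> MC D x' ->
  (homotopy_gauge_equiv D x x' <-> K2_homotopic D x x').
Proof.
move=> mcx mcx'; split.
- case/homotopy_gauge_equivP=> w [v [t [t' data]]].
  exact: gauge_data_K2_homotopic mcx mcx' data.
- by move=> /K2_homotopic_gauge_data /homotopy_gauge_equivP.
Qed.
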